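(* Let $\mathcal{H}=(V,H,\bm{w})$ be a finite, connected, weighted undirected hypergraph in which every hyperedge has at least two vertices. (i) For any distinct $u,v\in V$ with $\kappa(u,v)>0$, $$d(u,v)\le\frac{2\max_{h\in H}w_h}{\kappa(u,v)}.$$ (ii) If there is $\kappa>0$ with $\kappa(u,v)\ge\kappa$ for every well-transported pair $\{u,v\}$, then $$\mathrm{diam}(\mathcal{H})\le\frac{2\max_{h\in H}w_h}{\kappa}.$$
   Context: A weighted undirected hypergraph $\mathcal{H}=(V,H,\bm{w})$ has a finite vertex set $V$, a finite set $H$ of hyperedges (subsets of $V$), and positive weights $w_h>0$. Distinct vertices $u,v$ are adjacent ($u\sim v$) if some hyperedge contains both; $\Gamma(x)=\{z: z\sim x\}$; $\mathrm{Deg}(x)=\sum_{h\ni x}w_h$. A hyperpath connecting $u$ and $v$ is a sequence of hyperedges $h_1,\dots,h_l$ with $u\in h_1$, $v\in h_l$, $h_j\cap h_{j+1}\neq\emptyset$; $\mathcal{H}$ is connected if all pairs of distinct vertices are connected by hyperpaths. For $u\ne v$, $d(u,v)=\inf_\gamma\sum_{h\in\gamma}w_h$ over hyperpaths connecting $u,v$; $d(u,u)=0$; $\mathrm{diam}(\mathcal{H})=\max_{u,v}d(u,v)$. $W(\mu,\nu)=\inf_\pi\sum_{x,y}\pi(x,y)d(x,y)$ over couplings $\pi$ of probability measures $\mu,\nu$ on $V$. For $\alpha\in[0,1]$: $\mu_x^\alpha(x)=\alpha$, $\mu_x^\alpha(z)=(1-\alpha)\sum_{h'\ni x,z}\frac{1}{|h'|-1}\frac{w_{h'}}{\mathrm{Deg}(x)}$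 for $z\in\Gamma(x)$, $0$ otherwise. For distinct $u,v$: $\kappa_\alpha(u,v)=1-W(\mu_u^\alpha,\mu_v^\alpha)/d(u,v)$, and the Lin–Lu–Yau curvature is $\kappa(u,v)=\lim_{\alpha\to1^-}\kappa_\alpha(u,v)/(1-\alpha)$ (this limit exists in $\mathbb{R}$). A pair $\{u,v\}$ of distinct vertices is well-transported if there is a hyperedge $h$ containing both with $d(u,v)=w_h$. *)

From HB Require Import structures.
From mathcomp Require Import all_boot all_order all_algebra.
From mathcomp Require Import all_classical all_reals all_analysis.
Set Implicit Arguments. Unset Strict Implicit. Unset Printing Implicit Defensive.
Import Order.TTheory GRing.Theory Num.Theory.
Import numFieldNormedType.Exports.

Local Open Scope ring_scope.

Section Hypergraph.
Variables (R : realType) (V : finType) (H : {set {set V}}) (w : {set V} -> R).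

Definition adj (u v : V) : bool :=
  (u != v) && [exists h in H, (u \in h) && (v \in h)].

Definition Deg (x : V) : R := \sum_(h in H | x \in h) w h.

Definition hyperpath (u v : V) (p : seq {set V}) : bool :=
  [&& p != [::], all (fun h => h \in H) p, u \in head (finset.set0 : {set V}) p,
      v \in last (finset.set0 : {set V}) p &
      path (fun a b : {set V} => [exists z, (z \in a) && (z \in b)])
           (head (finset.set0 : {set V}) p) (behead p)].

Definition hconnected : Prop :=
  forall u v : V, u != v -> exists p, hyperpath u v p.

Definition hdist (u v : V) : R :=
  if u == v then 0
  else inf ([set x : R | exists p, hyperpath u v p /\ x = \sum_(h <- p) w h])%classic.

Definition hdiam : R := \big[Num.max/0]_(u : V) \big[Num.max/0]_(v : V) hdist u v.

Definition maxw : R := \big[Num.max/0]_(h in H) w h.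

Definition coupling (mu nu : V -> R) (pi : V -> V -> R) : Prop :=
  (forall x y, 0 <= pi x y) /\
  (forall x, \sum_(y : V) pi x y = mu x) /\
  (forall y, \sum_(x : V) pi x y = nu y).

Definition W1 (mu nu : V -> R) : R :=
  inf ([set c : R | exists pi, coupling mu nu pi /\
                   c = \sum_(x : V) \sum_(y : V) pi x y * hdist x y])%classic.

Definition mu_walk (alpha : R) (x z : V) : R :=
  if z == x then alpha
  else if adj x z then
    (1 - alpha) * \sum_(h in H | (x \in h) && (z \in h))
                    ((#|h|.-1)%:R)^-1 * (w h / Deg x)
  else 0.

Definition kappa_alpha (alpha : R) (u v : V) : R :=
  1 - W1 (mu_walk alpha u) (mu_walk alpha v) / hdist u v.

Definition LLY_curvature (u v : V) : R :=
  lim ((fun alpha : R => kappa_alpha alpha u v / (1 - alpha)) @ at_left (1 : R))%classic.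

Definition well_transported (u v : V) : Prop :=
  u != v /\ exists2 h, h \in H & [/\ u \in h, v \in h & hdist u v = w h].

End Hypergraph.

(* Any coupling of the lazy walks from u and from v moves at most (1 - alpha)
   of its mass, and only along single hyperedges, away from the two Dirac
   masses at u and v; by the triangle inequality its cost is therefore at least
   d(u,v) - 2 (1 - alpha) max w, which gives kappa(u,v) <= 2 max w / d(u,v).

   Mixing any coupling at laziness alpha with the Dirac coupling at
   (u,v) yields a coupling at any larger laziness, so kappa_alpha / (1 - alpha)
   is nondecreasing and bounded: the limit kappa(u,v) exists.  For (ii), a
   minimal hyperpath from u to v starts with a hop u -> x inside a hyperedge h
   with d(u,x) = w h and d(u,v) = d(u,x) + d(x,v); the triangle inequality for
   W makes d(u,v) kappa(u,v) >= d(u,x) kappa(u,x) + d(x,v) kappa(x,v), so the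
   lower bound k on well-transported pairs propagates to all pairs by induction
   on the number of vertices closer to v, and (i) bounds the diameter. *)

From HB Require Import structures.
From mathcomp Require Import all_boot all_order all_algebra.
From mathcomp Require Import all_classical all_reals all_analysis.
From mathcomp Require Import ring lra.
Import Order.TTheory GRing.Theory Num.Theory.
Import numFieldNormedType.Exports.
Local Open Scope ring_scope.
Set Implicit Arguments. Unset Strict Implicit. Unset Printing Implicit Defensive.

Section RealFacts.
Variable R : realType.

Lemma le_affine_inf (C : set R) (t b x : R) :
  (C !=set0)%classic -> has_lbound C -> 0 <= t ->
  (forall c, C c -> x <= t * c + b) -> x <= t * inf C + b.
Proof.
move=> [c0 Cc0] C_lb t_ge0 x_le.
have [t0|t_neq0] := eqVneq t 0; first by move: (x_le _ Cc0); rewrite t0 !mul0r.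
have t_gt0 : 0 < t by rewrite lt0r t_neq0.
suff : (x - b) / t <= inf C by rewrite ler_pdivrMr // mulrC; lra.
apply: lb_le_inf; first by exists c0.
by move=> c /x_le; rewrite ler_pdivrMr // mulrC; lra.
Qed.

Lemma inf_le_infD (A B C : set R) :
  (A !=set0)%classic -> has_lbound A -> (B !=set0)%classic -> has_lbound B ->
  (forall a b, A a -> B b -> inf C <= a + b) -> inf C <= inf A + inf B.
Proof.
move=> A0 A_lb B0 B_lb le_ab.
rewrite -[inf A]mul1r; apply: le_affine_inf => // a Aa.
rewrite mul1r addrC -[inf B]mul1r; apply: le_affine_inf => // b Bb.
by rewrite mul1r addrC; exact: le_ab.
Qed.

Lemma ler_lim_comb (F : set_system R) {FF : ProperFilter F} (f g h : R -> R)
    (c c1 c2 : R) :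
  cvg (f @ F)%classic -> cvg (g @ F)%classic -> cvg (h @ F)%classic ->
  (\forall a \near F, c1 * g a + c2 * h a <= c * f a)%classic ->
  c1 * lim (g @ F)%classic + c2 * lim (h @ F)%classic <= c * lim (f @ F)%classic.
Proof.
move=> cf cg ch le_near.
have comb_cvg : ((fun a => c1 * g a + c2 * h a) @ F -->
    c1 * lim (g @ F) + c2 * lim (h @ F))%classic.
  by apply: (@cvgD _ _ _ _ _ (fun a => c1 * g a) (fun a => c2 * h a)); exact: cvgMl_tmp.
have f_cvg : ((fun a => c * f a) @ F --> c * lim (f @ F))%classic by exact: cvgMl_tmp.
rewrite -(cvg_lim (@Rhausdorff R) comb_cvg) -(cvg_lim (@Rhausdorff R) f_cvg).
by apply: ler_lim => //; apply/cvg_ex; eexists; [exact: comb_cvg | exact: f_cvg].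
Qed.

Lemma sumr_delta (I : finType) (F : I -> R) (c : I) :
  \sum_i (i == c)%:R * F i = F c.
Proof. by rewrite (bigD1 c) //= eqxx mul1r big1 ?addr0 // => i /negbTE ->; rewrite mul0r. Qed.

End RealFacts.

Section Couplings.
Variables (R : realType) (V : finType).
Implicit Types (t : R) (m n r : V -> R) (pi : V -> V -> R).

Definition transport_cost (c : V -> V -> R) pi : R :=
  \sum_x \sum_y pi x y * c x y.

Lemma coupling_prod m n : (forall x, 0 <= m x) -> (forall x, 0 <= n x) ->
  \sum_x m x = 1 -> \sum_x n x = 1 -> coupling m n (fun x y => m x * n y).
Proof.
move=> m_ge0 n_ge0 m1 n1; split; first by move=> x y; exact: mulr_ge0.
split; first by move=> x; rewrite -mulr_sumr n1 mulr1.
by move=> y; rewrite -mulr_suml m1 mul1r.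
Qed.

Lemma coupling_convex t m1 n1 pi1 m2 n2 pi2 : 0 <= t <= 1 ->
  coupling m1 n1 pi1 -> coupling m2 n2 pi2 ->
  coupling (fun x => t * m1 x + (1 - t) * m2 x) (fun y => t * n1 y + (1 - t) * n2 y)
           (fun x y => t * pi1 x y + (1 - t) * pi2 x y).
Proof.
move=> /andP[t0 t1] [pi1_ge0 [pi1_row pi1_col]] [pi2_ge0 [pi2_row pi2_col]].
split; first by move=> x y; rewrite addr_ge0 ?mulr_ge0 ?subr_ge0.
by split=> [x|y]; rewrite big_split /= -!mulr_sumr ?pi1_row ?pi2_row ?pi1_col ?pi2_col.
Qed.

Lemma transport_cost_convex (c : V -> V -> R) t pi1 pi2 :
  transport_cost c (fun x y => t * pi1 x y + (1 - t) * pi2 x y) =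
    t * transport_cost c pi1 + (1 - t) * transport_cost c pi2.
Proof.
rewrite /transport_cost !mulr_sumr -big_split /=; apply: eq_bigr => x _.
rewrite !mulr_sumr -big_split /=; apply: eq_bigr => y _; ring.
Qed.

(* The gluing of pi1 and pi2 along their common marginal n; where n y = 0 both
   couplings vanish, so the junk value 0 is harmless. *)
Definition glue n pi1 pi2 (x y z : V) : R :=
  if n y == 0 then 0 else pi1 x y * pi2 y z / n y.

Section Gluing.
Variables (m n r : V -> R) (pi1 pi2 : V -> V -> R).
Hypotheses (pi1_coupling : coupling m n pi1) (pi2_coupling : coupling n r pi2).

Lemma glue_ge0 x y z : 0 <= glue n pi1 pi2 x y z.
Proof.
case: pi1_coupling pi2_coupling => [pi1_ge0 [_ pi1_col]] [pi2_ge0 _].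
rewrite /glue; case: ifP => // _; apply: divr_ge0; first exact: mulr_ge0.
by rewrite -pi1_col; apply: sumr_ge0.
Qed.

Lemma sum_glue_last x y : \sum_z glue n pi1 pi2 x y z = pi1 x y.
Proof.
case: pi1_coupling pi2_coupling => [pi1_ge0 [_ pi1_col]] [_ [pi2_row _]].
rewrite /glue; have [ny0|ny_neq0] := eqVneq (n y) 0; last first.
  by rewrite -mulr_suml -mulr_sumr pi2_row mulfK.
rewrite big1 // (psumr_eq0P (P := predT) (F := fun x => pi1 x y)) //.
by rewrite pi1_col.
Qed.

Lemma sum_glue_first y z : \sum_x glue n pi1 pi2 x y z = pi2 y z.
Proof.
case: pi1_coupling pi2_coupling => [_ [_ pi1_col]] [pi2_ge0 [pi2_row _]].
rewrite /glue; have [ny0|ny_neq0] := eqVneq (n y) 0; last first.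
  by rewrite -!mulr_suml pi1_col mulrC mulrA mulVf ?mul1r.
rewrite big1 // (psumr_eq0P (P := predT) (F := fun z => pi2 y z)) //.
by rewrite pi2_row.
Qed.

Lemma coupling_glue : coupling m r (fun x z => \sum_y glue n pi1 pi2 x y z).
Proof.
case: pi1_coupling pi2_coupling => [_ [pi1_row _]] [_ [_ pi2_col]].
split; first by move=> x z; apply: sumr_ge0 => y _; exact: glue_ge0.
split=> [x|z]; rewrite exchange_big /=.
  by rewrite -pi1_row; apply: eq_bigr => y _; exact: sum_glue_last.
by rewrite -pi2_col; apply: eq_bigr => y _; exact: sum_glue_first.
Qed.

Lemma transport_cost_glue (c : V -> V -> R) :
  (forall x y z, c x z <= c x y + c y z) ->
  transport_cost c (fun x z => \sum_y glue n pi1 pi2 x y z) <=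
    transport_cost c pi1 + transport_cost c pi2.
Proof.
move=> c_tri; pose g := glue n pi1 pi2.
have -> : transport_cost c pi1 = \sum_x \sum_z \sum_y g x y z * c x y.
  apply: eq_bigr => x _; rewrite exchange_big /=; apply: eq_bigr => y _.
  by rewrite -mulr_suml sum_glue_last.
have -> : transport_cost c pi2 = \sum_x \sum_z \sum_y g x y z * c y z.
  rewrite exchange_big /= (eq_bigr (fun z => \sum_y \sum_x g x y z * c y z)).
    rewrite exchange_big /=; apply: eq_bigr => y _; apply: eq_bigr => z _.
    by rewrite -mulr_suml sum_glue_first.
  by move=> z _; rewrite exchange_big.
rewrite -big_split /=; apply: ler_sum => x _; rewrite -big_split /=.
apply: ler_sum => z _; rewrite mulr_suml -big_split /=.
by apply: ler_sum => y _; rewrite -mulrDr ler_wpM2l ?glue_ge0.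
Qed.

End Gluing.

End Couplings.

Section Hypergraph.
Variables (R : realType) (V : finType) (H : {set {set V}}) (w : {set V} -> R).
Hypothesis w_pos : forall h, h \in H -> 0 < w h.
Hypothesis H_size : forall h, h \in H -> (2 <= #|h|)%N.
Hypothesis H_conn : hconnected H.
Implicit Types (a t : R) (m n r : V -> R).

Local Notation d := (hdist H w).
Local Notation path_weights u v :=
  ([set x : R | exists p, hyperpath H u v p /\ x = \sum_(h <- p) w h])%classic.

Lemma sum_w_ge0 (p : seq {set V}) : all (mem H) p -> 0 <= \sum_(h <- p) w h.
Proof. by move=> /allP pH; rewrite big_seq sumr_ge0 // => h /pH/w_pos/ltW. Qed.

Lemma path_weights_ge0 u v : lbound (path_weights u v) 0.
Proof. by move=> _ [p [/and5P[_ pH _ _ _] ->]]; exact: sum_w_ge0. Qed.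

Lemma has_lbound_path_weights u v : has_lbound (path_weights u v).
Proof. by exists 0; exact: path_weights_ge0. Qed.

Lemma path_weights_neq0 u v : u != v -> (path_weights u v !=set0)%classic.
Proof. by move=> uv; have [p p_uv] := H_conn uv; exists (\sum_(h <- p) w h), p. Qed.

Lemma hdistxx u : d u u = 0.
Proof. by rewrite /hdist eqxx. Qed.

Lemma hdist_neq u v : u != v -> d u v = inf (path_weights u v).
Proof. by rewrite /hdist => /negbTE ->. Qed.

Lemma hdist_ge0 u v : 0 <= d u v.
Proof.
have [->|uv] := eqVneq u v; first by rewrite hdistxx.
rewrite hdist_neq //; apply: lb_le_inf; [exact: path_weights_neq0 | exact: path_weights_ge0].
Qed.

Lemma hdist_le_weight u v p :
  u != v -> hyperpath H u v p -> d u v <= \sum_(h <- p) w h.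
Proof.
by move=> uv p_uv; rewrite hdist_neq //; apply: ge_inf; [exact: has_lbound_path_weights | exists p].
Qed.

Lemma hdist_le_w h u v : h \in H -> u \in h -> v \in h -> d u v <= w h.
Proof.
move=> hH uh vh; have [->|uv] := eqVneq u v; first by rewrite hdistxx ltW ?w_pos.
have := @hdist_le_weight u v [:: h] uv; rewrite big_seq1; apply.
by rewrite /hyperpath /= hH uh vh.
Qed.

Lemma hyperpath_cat u y z p q :
  hyperpath H u y p -> hyperpath H y z q -> hyperpath H u z (p ++ q).
Proof.
case: p => [|a p]; first by rewrite /hyperpath eqxx.
case: q => [|b q]; first by move=> _ /and5P[].
move=> /and5P[_ /= /andP[aH pH] ua y_last p_path].
move=> /and5P[_ /= /andP[bH qH] yb z_last q_path].
apply/and5P; split => //=.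
- by rewrite aH all_cat pH /= bH qH.
- by rewrite last_cat.
- by rewrite cat_path p_path /= q_path andbT; apply/existsP; exists y; rewrite y_last yb.
Qed.

Lemma hdist_triangle u y z : d u z <= d u y + d y z.
Proof.
have [->|uz] := eqVneq u z; first by rewrite hdistxx addr_ge0 ?hdist_ge0.
have [->|uy] := eqVneq u y; first by rewrite hdistxx add0r.
have [->|yz] := eqVneq y z; first by rewrite hdistxx addr0.
rewrite !hdist_neq //; apply: inf_le_infD; try exact: path_weights_neq0;
  try exact: has_lbound_path_weights.
move=> _ _ [p [p_uy ->]] [q [q_yz ->]]; rewrite -big_cat -hdist_neq //.
by apply: hdist_le_weight => //; exact: hyperpath_cat p_uy q_yz.
Qed.

Definition first_hop u (xh : V * {set V}) :=
  [&& xh.2 \in H, u \in xh.2, xh.1 \in xh.2 & u != xh.1].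

Lemma hyperpath_first_hop u v p : u != v -> hyperpath H u v p ->
  exists2 xh, first_hop u xh & w xh.2 + d xh.1 v <= \sum_(h <- p) w h.
Proof.
move=> uv; elim: p => [|a p IH]; first by rewrite /hyperpath eqxx.
move=> /and5P[_ /= /andP[aH pH] ua v_last a_path].
have [va|va] := boolP (v \in a).
  exists (v, a); first by rewrite /first_hop /= aH ua va uv.
  by rewrite /= big_cons hdistxx addr0 lerDl sum_w_ge0.
case: p IH pH v_last a_path => [|b p] IH pH v_last; first by rewrite /= (negbTE va) in v_last.
move=> /andP[/existsP[y /andP[ya yb]] p_path].
have y_path : hyperpath H y v (b :: p) by apply/and5P.
have [yu|yu] := eqVneq y u.
  subst y; have [xh hop le_p] := IH y_path.
  by exists xh => //; rewrite big_cons (le_trans le_p) // lerDr ltW ?w_pos.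
exists (y, a); first by rewrite /first_hop /= aH ua ya eq_sym yu.
rewrite /= big_cons lerD2l; apply: hdist_le_weight => //.
by apply: contraNneq va => <-.
Qed.

Lemma hdist_first_hop u v : u != v -> exists x h,
  [/\ h \in H, u \in h, x \in h, u != x & d u x = w h /\ d u v = d u x + d x v].
Proof.
move=> uv; have [p p_uv] := H_conn uv.
have [xh0 hop0 _] := hyperpath_first_hop uv p_uv.
pose F xh := w xh.2 + d xh.1 v.
have [[x h] /and4P[/= hH uh xh ux] F_min] := arg_minP F hop0.
have F_le : F (x, h) <= d u v.
  rewrite hdist_neq //; apply: lb_le_inf; first exact: path_weights_neq0.
  move=> _ [q [q_uv ->]]; have [xh' hop' le_q] := hyperpath_first_hop uv q_uv.
  exact: le_trans (F_min _ hop') le_q.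
have dux := hdist_le_w hH uh xh; have tri := hdist_triangle u x v.
rewrite /F /= in F_le.
by exists x, h; split => //; split; apply/eqP; rewrite eq_le; apply/andP; split; lra.
Qed.

Lemma hdist_gt0 u v : u != v -> 0 < d u v.
Proof.
move=> /hdist_first_hop[x [h [hH _ _ _ [dux ->]]]].
by rewrite dux ltr_pwDl ?w_pos ?hdist_ge0.
Qed.

Definition covered x := exists2 h, h \in H & x \in h.

Lemma covered_pair u v : u != v -> covered u /\ covered v.
Proof.
have cov x y : x != y -> covered x by move=> /hdist_first_hop[z [h [hH xh _ _ _]]]; exists h.
by move=> uv; split; [exact: cov uv | apply: (cov v u); rewrite eq_sym].
Qed.

Lemma le_maxw h : h \in H -> w h <= maxw H w.
Proof. by move=> hH; exact: (le_bigmax_cond _ (fun h => w h) hH). Qed.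

Lemma maxw_ge0 : 0 <= maxw H w.
Proof.
apply: (big_ind (fun x => 0 <= x)) => // [x y x0 y0|h /w_pos/ltW //].
by rewrite le_max x0.
Qed.

Local Notation mu := (mu_walk H w).

Lemma Deg_gt0 x : covered x -> 0 < Deg H w x.
Proof.
move=> [h0 h0H xh0]; rewrite /Deg (bigD1 h0) /=; last by rewrite h0H xh0.
rewrite ltr_pwDl ?w_pos // sumr_ge0 // => h /andP[/andP[hH _] _].
exact/ltW/w_pos.
Qed.

Lemma mu_walk_ge0 a x z : 0 <= a <= 1 -> 0 <= mu a x z.
Proof.
move=> /andP[a0 a1]; rewrite /mu_walk; case: ifP => // _; case: ifP => // _.
rewrite mulr_ge0 ?subr_ge0 // sumr_ge0 // => h /andP[hH _].
rewrite mulr_ge0 ?invr_ge0 // divr_ge0 //; first exact/ltW/w_pos.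
by apply: sumr_ge0 => h' /andP[/w_pos/ltW].
Qed.

Lemma mu_walk_affine t a b x z :
  mu (t * a + (1 - t) * b) x z = t * mu a x z + (1 - t) * mu b x z.
Proof.
rewrite /mu_walk; case: ifP => _ //; case: ifP => _; first by ring.
by rewrite !mulr0 addr0.
Qed.

Lemma mu_walk1 x z : mu 1 x z = (z == x)%:R.
Proof. by rewrite /mu_walk; case: ifP => // _; case: ifP; rewrite // subrr mul0r. Qed.

Lemma mu_walk_out a x z : z != x -> ~~ adj H x z -> mu a x z = 0.
Proof. by rewrite /mu_walk => /negbTE -> /negbTE ->. Qed.

(* Each hyperedge h through x has #|h| - 1 other vertices, each receiving the
   share 1 / (#|h| - 1) of w h / Deg x; so the moving mass is exactly 1 - a. *)
Lemma sum_mu_walk_neq a x : covered x -> \sum_(z | z != x) mu a x z = 1 - a.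
Proof.
move=> x_cov; have Deg_neq0 : Deg H w x != 0 by rewrite gt_eqF ?Deg_gt0.
rewrite (eq_bigr (fun z => (1 - a) * \sum_(h in H | (x \in h) && (z \in h))
                    ((#|h|.-1)%:R)^-1 * (w h / Deg H w x))); last first.
  move=> z zx; rewrite /mu_walk (negbTE zx); case: ifP => // not_adj.
  rewrite big1 ?mulr0 // => h /andP[hH /andP[xh zh]].
  move: not_adj; rewrite /adj eq_sym zx /=.
  by have -> // : [exists h0, (h0 \in H) && ((x \in h0) && (z \in h0))];
    apply/existsP; exists h; rewrite hH xh zh.
rewrite -mulr_sumr (exchange_big_dep (fun h => (h \in H) && (x \in h))) /=;
  last by move=> z h _ /andP[-> /andP[-> _]].
rewrite (eq_bigr (fun h => w h / Deg H w x)); last first.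
  move=> h /andP[hH xh]; rewrite sumr_const.
  have -> : #|[pred z | (z != x) && ((h \in H) && ((x \in h) && (z \in h)))]| = #|h|.-1.
    by rewrite (cardsD1 x h) xh add1n /=; apply: eq_card => z; rewrite !inE hH.
  have size_neq0 : (#|h|.-1)%:R != 0 :> R.
    by rewrite pnatr_eq0; move: (H_size hH); case: #|h| => [|[|n]].
  by rewrite -[X in X = _]mulr_natl mulrA mulfV // mul1r.
by rewrite -mulr_suml -/(Deg H w x) mulfV // mulr1.
Qed.

Lemma sum_mu_walk a x : covered x -> \sum_z mu a x z = 1.
Proof.
by move=> x_cov; rewrite (bigD1 x) //= sum_mu_walk_neq // {1}/mu_walk eqxx addrC subrK.
Qed.

Lemma coupling_mu_walk a u v : 0 <= a <= 1 -> covered u -> covered v ->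
  exists pi, coupling (mu a u) (mu a v) pi.
Proof.
move=> a01 u_cov v_cov; eexists; apply: coupling_prod;
  by [move=> ?; exact: mu_walk_ge0 | exact: sum_mu_walk].
Qed.

Lemma mean_mu_walk_le a x (f : V -> R) : 0 <= a <= 1 -> covered x -> f x = 0 ->
  (forall h z, h \in H -> x \in h -> z \in h -> f z <= w h) ->
  \sum_z mu a x z * f z <= (1 - a) * maxw H w.
Proof.
move=> a01 x_cov fx0 f_le.
rewrite (bigD1 x) //= fx0 mulr0 add0r -(sum_mu_walk_neq a x_cov) mulr_suml.
apply: ler_sum => z zx.
have [/andP[_ /existsP[h /and3P[hH xh zh]]]|not_adj] := boolP (adj H x z).
  by rewrite ler_wpM2l ?mu_walk_ge0 // (le_trans (f_le _ _ hH xh zh)) ?le_maxw.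
by rewrite mu_walk_out // !mul0r.
Qed.

Local Notation cost := (transport_cost d).
Local Notation costs m n :=
  ([set c : R | exists pi, coupling m n pi /\ c = cost pi])%classic.

Lemma has_lbound_costs m n : has_lbound (costs m n).
Proof.
exists 0 => _ [pi [[pi_ge0 _] ->]]; rewrite sumr_ge0 // => x _.
by rewrite sumr_ge0 // => y _; rewrite mulr_ge0 ?hdist_ge0.
Qed.

Lemma W1_le_cost m n pi : coupling m n pi -> W1 H w m n <= cost pi.
Proof. by move=> pi_coupling; apply: ge_inf; [exact: has_lbound_costs | exists pi]. Qed.

Lemma W1_ge m n b : (exists pi, coupling m n pi) ->
  (forall pi, coupling m n pi -> b <= cost pi) -> b <= W1 H w m n.
Proof.
move=> [pi pi_coupling] b_le; apply: lb_le_inf; first by exists (cost pi), pi.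
by move=> _ [pi' [pi'_coupling ->]]; exact: b_le.
Qed.

Lemma W1_triangle m n r : (exists pi, coupling m n pi) -> (exists pi, coupling n r pi) ->
  W1 H w m r <= W1 H w m n + W1 H w n r.
Proof.
move=> [pi1 pi1_coupling] [pi2 pi2_coupling].
apply: inf_le_infD; try exact: has_lbound_costs.
- by exists (cost pi1), pi1.
- by exists (cost pi2), pi2.
move=> _ _ [p1 [p1_coupling ->]] [p2 [p2_coupling ->]].
apply: le_trans (W1_le_cost (coupling_glue p1_coupling p2_coupling)) _.
by apply: (transport_cost_glue p1_coupling p2_coupling) => x y z; exact: hdist_triangle.
Qed.

(* Pointwise d x y >= d u v - d u x - d y v, and each walk carries its
   non-lazy mass 1 - a at most one hyperedge away from its centre. *)
Lemma W1_mu_walk_ge a u v : 0 <= a <= 1 -> covered u -> covered v ->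
  d u v - 2 * ((1 - a) * maxw H w) <= W1 H w (mu a u) (mu a v).
Proof.
move=> a01 u_cov v_cov; apply: W1_ge; first exact: coupling_mu_walk.
move=> pi [pi_ge0 [pi_row pi_col]].
have mean_u : \sum_x mu a u x * d u x <= (1 - a) * maxw H w.
  by apply: mean_mu_walk_le; rewrite ?hdistxx // => h z hH uh zh; exact: hdist_le_w.
have mean_v : \sum_y mu a v y * d y v <= (1 - a) * maxw H w.
  by apply: mean_mu_walk_le; rewrite ?hdistxx // => h z hH vh zh; exact: hdist_le_w.
have pointwise : \sum_x \sum_y pi x y * (d u v - d u x - d y v) <= cost pi.
  apply: ler_sum => x _; apply: ler_sum => y _; apply: ler_wpM2l => //.
  by have := hdist_triangle u x v; have := hdist_triangle x y v; lra.
have total_uv : \sum_x \sum_y pi x y * d u v = d u v.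
  under eq_bigr do rewrite -mulr_suml pi_row.
  by rewrite -mulr_suml sum_mu_walk // mul1r.
have total_ux : \sum_x \sum_y pi x y * d u x = \sum_x mu a u x * d u x.
  by apply: eq_bigr => x _; rewrite -mulr_suml pi_row.
have total_yv : \sum_x \sum_y pi x y * d y v = \sum_y mu a v y * d y v.
  by rewrite exchange_big; apply: eq_bigr => y _; rewrite -mulr_suml pi_col.
move: pointwise.
under eq_bigr do under eq_bigr do rewrite !mulrBr.
under eq_bigr do rewrite !sumrB.
rewrite !sumrB total_uv total_ux total_yv; lra.
Qed.

(* mu_(t a + 1 - t) is the t-mixture of mu_a and the Dirac mass, so mix any
   coupling at laziness a with the Dirac coupling of (u, v). *)
Lemma W1_mu_walk_mix t a u v : 0 <= t <= 1 -> 0 <= a <= 1 ->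
  covered u -> covered v ->
  W1 H w (mu (t * a + (1 - t)) u) (mu (t * a + (1 - t)) v) <=
    t * W1 H w (mu a u) (mu a v) + (1 - t) * d u v.
Proof.
move=> t01 a01 u_cov v_cov.
have mu_mix x : mu (t * a + (1 - t)) x = (fun z => t * mu a x z + (1 - t) * mu 1 x z).
  by apply/funext => z; rewrite -mu_walk_affine mulr1.
have mu1_ge0 x z : 0 <= mu 1 x z by rewrite mu_walk_ge0 // ler01 lexx.
have dirac := coupling_prod (mu1_ge0 u) (mu1_ge0 v) (sum_mu_walk 1 u_cov)
  (sum_mu_walk 1 v_cov).
have dirac_cost : cost (fun x y => mu 1 u x * mu 1 v y) = d u v.
  rewrite /transport_cost.
  under eq_bigr do under eq_bigr do rewrite -mulrA.
  under eq_bigr do rewrite -mulr_sumr.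
  transitivity (\sum_x (x == u)%:R * \sum_y (y == v)%:R * d x y).
    apply: eq_bigr => x _; rewrite mu_walk1; congr (_ * _).
    by apply: eq_bigr => y _; rewrite mu_walk1.
  by under eq_bigr do rewrite sumr_delta; rewrite sumr_delta.
rewrite [W1 H w (mu a u) _]/W1 mu_mix mu_mix; apply: le_affine_inf.
- by have [pi pi_coupling] := coupling_mu_walk a01 u_cov v_cov; exists (cost pi), pi.
- exact: has_lbound_costs.
- by case/andP: t01.
move=> _ [pi [pi_coupling ->]].
rewrite -dirac_cost -transport_cost_convex; apply: W1_le_cost.
exact: coupling_convex.
Qed.

Local Notation kappa_ratio u v := (fun a => kappa_alpha H w a u v / (1 - a)).

Lemma kappa_ratio_le a u v : u != v -> 0 <= a < 1 ->
  kappa_ratio u v a <= 2 * maxw H w / d u v.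
Proof.
move=> uv /andP[a0 a1]; have d_gt0 := hdist_gt0 uv.
have [u_cov v_cov] := covered_pair uv.
have a01 : 0 <= a <= 1 by rewrite a0 ltW.
have W_ge := W1_mu_walk_ge a01 u_cov v_cov.
rewrite /kappa_alpha; set W := W1 _ _ _ _ in W_ge *.
set D := d u v in W_ge d_gt0 *; set M := maxw H w in W_ge *.
have one_a_gt0 : 0 < 1 - a by rewrite subr_gt0.
have -> : (1 - W / D) / (1 - a) = (D - W) / (D * (1 - a)) by field; rewrite ?gt_eqF.
rewrite ler_pdivrMr ?mulr_gt0 //.
have -> : 2 * M / D * (D * (1 - a)) = 2 * ((1 - a) * M) by field; rewrite gt_eqF.
lra.
Qed.

Lemma kappa_ratio_homo a b u v : u != v -> 0 <= a -> a <= b -> b < 1 ->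
  kappa_ratio u v a <= kappa_ratio u v b.
Proof.
move=> uv a0 ab b1; have d_gt0 := hdist_gt0 uv; have [u_cov v_cov] := covered_pair uv.
have one_a_gt0 : 0 < 1 - a by rewrite subr_gt0 (le_lt_trans ab).
have one_b_gt0 : 0 < 1 - b by rewrite subr_gt0.
pose t := (1 - b) / (1 - a).
have t01 : 0 <= t <= 1.
  by rewrite divr_ge0 ?(ltW one_a_gt0) ?(ltW one_b_gt0) //= ler_pdivrMr // mul1r; lra.
have b_mix : b = t * a + (1 - t) by rewrite /t; field; rewrite gt_eqF.
have a01 : 0 <= a <= 1 by rewrite a0 /=; lra.
have := W1_mu_walk_mix t01 a01 u_cov v_cov; rewrite -b_mix /kappa_alpha.
set X := W1 _ _ (mu a u) _; set Y := W1 _ _ (mu b u) _; set D := d u v in d_gt0 *.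
move=> Y_le.
have Y_le' : Y * (1 - a) <= (1 - b) * X + (b - a) * D.
  have := ler_wpM2r (ltW one_a_gt0) Y_le.
  suff -> : (t * X + (1 - t) * D) * (1 - a) = (1 - b) * X + (b - a) * D by [].
  by rewrite /t; field; rewrite gt_eqF.
rewrite -subr_ge0.
have -> : (1 - Y / D) / (1 - b) - (1 - X / D) / (1 - a) =
    ((D - Y) * (1 - a) - (D - X) * (1 - b)) / (D * (1 - a) * (1 - b)).
  by field; rewrite ?gt_eqF.
by apply: divr_ge0; [lra | rewrite ltW ?mulr_gt0].
Qed.

Lemma kappa_ratio_cvg u v : u != v -> cvg (kappa_ratio u v @ at_left (1 : R))%classic.
Proof.
move=> uv; apply: nondecreasing_at_left_is_cvgr.
- apply: filterS (nbhs_left_gt (@ltr01 R)) => x x0 y z.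
  rewrite !in_itv /= => /andP[xy _] /andP[_ z1] yz.
  exact: kappa_ratio_homo uv (le_trans (ltW x0) (ltW xy)) yz z1.
- apply: filterS (nbhs_left_gt (@ltr01 R)) => x x0.
  exists (2 * maxw H w / d u v) => _ [y + <-]; rewrite /= in_itv /= => /andP[xy y1].
  by apply: kappa_ratio_le => //; rewrite y1 andbT (le_trans (ltW x0) (ltW xy)).
Qed.

Lemma near_left1_ge0_lt1 : (\forall a \near at_left (1 : R), 0 <= a < 1)%classic.
Proof.
near=> a; apply/andP; split.
  by near: a; apply: nbhs_left_ge; exact: ltr01.
by near: a; exact: nbhs_left_lt.
Unshelve. all: by end_near.
Qed.

Lemma LLY_curvature_le u v : u != v -> LLY_curvature H w u v <= 2 * maxw H w / d u v.
Proof.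
move=> uv; apply: limr_le; first exact: kappa_ratio_cvg.
by apply: filterS near_left1_ge0_lt1 => a; exact: kappa_ratio_le.
Qed.

Lemma hdist_le_LLY_curvature u v : u != v -> 0 < LLY_curvature H w u v ->
  d u v <= 2 * maxw H w / LLY_curvature H w u v.
Proof.
move=> uv kappa_gt0; move: (LLY_curvature_le uv).
by rewrite !ler_pdivlMr ?hdist_gt0 // mulrC.
Qed.

(* Curvature is superadditive along a geodesic u - x - v, by the triangle
   inequality for W at every laziness a. *)
Lemma LLY_curvature_geodesic u x v : u != v -> u != x -> x != v ->
  d u v = d u x + d x v ->
  d u x * LLY_curvature H w u x + d x v * LLY_curvature H w x v <=
    d u v * LLY_curvature H w u v.
Proof.
move=> uv ux xv duv; have dux_gt0 := hdist_gt0 ux; have dxv_gt0 := hdist_gt0 xv.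
have [u_cov v_cov] := covered_pair uv; have [x_cov _] := covered_pair xv.
apply: ler_lim_comb; try exact: kappa_ratio_cvg.
apply: filterS near_left1_ge0_lt1 => a /andP[a0 a1].
have a01 : 0 <= a <= 1 by rewrite a0 ltW.
have one_a_gt0 : 0 < 1 - a by rewrite subr_gt0.
have W_tri := W1_triangle (coupling_mu_walk a01 u_cov x_cov)
  (coupling_mu_walk a01 x_cov v_cov).
rewrite /= /kappa_alpha -subr_ge0.
set Wuv := W1 _ _ (mu a u) (mu a v) in W_tri *.
set Wux := W1 _ _ (mu a u) (mu a x) in W_tri *.
set Wxv := W1 _ _ (mu a x) (mu a v) in W_tri *.
have -> : d u v * ((1 - Wuv / d u v) / (1 - a)) - (d u x * ((1 - Wux / d u x) / (1 - a))
    + d x v * ((1 - Wxv / d x v) / (1 - a))) = (Wux + Wxv - Wuv) / (1 - a).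
  by rewrite duv; field; rewrite !gt_eqF // addr_gt0.
by apply: divr_ge0; [rewrite subr_ge0 | exact: ltW].
Qed.

Lemma LLY_curvature_ge k :
  (forall u v, well_transported H w u v -> k <= LLY_curvature H w u v) ->
  forall u v, u != v -> k <= LLY_curvature H w u v.
Proof.
move=> k_le u v; have [n card_lt] := ubnP #|[set y | d y v < d u v]|.
elim: n u card_lt => [|n IH] u; first by rewrite ltn0.
rewrite ltnS => card_le uv.
have [x [h [hH uh xh ux [dux duv]]]] := hdist_first_hop uv.
have k_ux : k <= LLY_curvature H w u x by apply: k_le; split => //; exists h.
have [<-|xv] := eqVneq x v; first exact: k_ux.
have dxv_lt : d x v < d u v by rewrite duv dux ltrDr w_pos.
have k_xv : k <= LLY_curvature H w x v.
  apply: IH xv; apply: leq_trans card_le; apply: proper_card; apply/properP; split.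
    by apply/fintype.subsetP => y; rewrite !inE => /lt_trans; apply.
  by exists x; rewrite !inE ?ltxx.
rewrite -(ler_pM2l (hdist_gt0 uv)); apply: le_trans (LLY_curvature_geodesic uv ux xv duv).
by rewrite duv mulrDl; apply: lerD; rewrite ler_wpM2l ?hdist_ge0.
Qed.

Lemma hdiam_le b : 0 <= b -> (forall u v, u != v -> d u v <= b) -> hdiam H w <= b.
Proof.
move=> b0 d_le; apply: bigmax_le => // u _; apply: bigmax_le => // v _.
by have [->|/d_le] := eqVneq u v; rewrite ?hdistxx.
Qed.

Lemma hdiam_le_LLY_curvature k : 0 < k ->
  (forall u v, well_transported H w u v -> k <= LLY_curvature H w u v) ->
  hdiam H w <= 2 * maxw H w / k.
Proof.
move=> k_gt0 k_le; apply: hdiam_le => [|u v uv].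
  by rewrite divr_ge0 ?mulr_ge0 ?maxw_ge0 ?ltW.
have kappa_ge := LLY_curvature_ge k_le uv.
have kappa_gt0 := lt_le_trans k_gt0 kappa_ge.
apply: le_trans (hdist_le_LLY_curvature uv kappa_gt0) _.
by rewrite ler_wpM2l ?mulr_ge0 ?maxw_ge0 // lef_pV2 ?posrE.
Qed.

End Hypergraph.

Unset Implicit Arguments.

Theorem mainTheorem4 (R : realType) (V : finType) (H : {set {set V}})
    (w : {set V} -> R)
    (w_pos : forall h, h \in H -> 0 < w h)
    (H_size : forall h, h \in H -> (2 <= #|h|)%N)
    (H_conn : hconnected H) :
  (forall u v : V, u != v -> 0 < LLY_curvature H w u v ->
     hdist H w u v <= 2 * maxw H w / LLY_curvature H w u v) /\
  (forall k : R, 0 < k ->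
     (forall u v : V, well_transported H w u v -> k <= LLY_curvature H w u v) ->
     hdiam H w <= 2 * maxw H w / k).
Proof.
by split=> [u v|k]; [apply: hdist_le_LLY_curvature | apply: hdiam_le_LLY_curvature].
Qed.
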